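(* For every real $2\times n$ matrix $X$ there exists a real $2\times n$ matrix $Y$ with $\Delta_{i,j}(Y)\ge 0$ for all $1\le i<j\le n$ such that the multiset $\{\Delta_{i,j}(Y):1\le i<j\le n\}$ coincides with the multiset $\{|\Delta_{i,j}(X)|:1\le i<j\le n\}$.
   Context: For a real $2\times n$ matrix $X$ and $1\le i<j\le n$, $\Delta_{i,j}(X)$ is the determinant of the $2\times2$ submatrix formed by columns $i$ and $j$. *)

From mathcomp Require Import all_boot all_order all_algebra.
From mathcomp Require Import reals.
Set Implicit Arguments. Unset Strict Implicit. Unset Printing Implicit Defensive.
Import Order.TTheory GRing.Theory Num.Theory.
Local Open Scope ring_scope.

Definition minor2 (R : comPzRingType) (n : nat) (X : 'M[R]_(2, n)) (i j : 'I_n) : R :=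
  X ord0 i * X ord_max j - X ord0 j * X ord_max i.

Definition pairs_lt (n : nat) : seq ('I_n * 'I_n) :=
  [seq p <- enum [set: ('I_n * 'I_n)%type] | (nat_of_ord p.1 < nat_of_ord p.2)%N].

(* The multiset {Delta_{i,j}(X) : i < j}, as a sequence (compare with perm_eq). *)
Definition minors (R : comPzRingType) (n : nat) (X : 'M[R]_(2, n)) : seq R :=
  [seq minor2 X p.1 p.2 | p <- pairs_lt n].

From mathcomp Require Import all_boot all_order all_algebra.
From mathcomp Require Import reals.
From mathcomp Require Import perm ring.
Import Order.TTheory GRing.Theory Num.Theory.
Local Open Scope ring_scope.

(* Replacing a column v of X by -v changes the signs of some
   minors but not their absolute values, so we may first flip every column
   into the closed upper half-plane H = {y > 0} u {y = 0, x >= 0}.  On H the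
   relation "det(u, v) >= 0" (u comes before v in angular order) is a total
   preorder, once the zero vector is declared smaller than everything.
   Sorting the normalized columns along this preorder yields a matrix Y all
   of whose minors Delta_{i,j}, i < j, are nonnegative; since Y differs from
   the normalized matrix by a column permutation, its minors are a
   reindexing of those of X up to sign. *)

Section HalfPlane.
Context {R : realDomainType}.

Definition upper (a1 a2 : R) : bool := (0 < a2) || ((a2 == 0) && (0 <= a1)).

Lemma upper_y_ge0 {a1 a2 : R} : upper a1 a2 -> 0 <= a2.
Proof. by case/orP => [/ltW // | /andP[/eqP -> _]]. Qed.

Lemma upper_det_trans {a1 a2 b1 b2 c1 c2 : R} :
  upper a1 a2 -> upper b1 b2 -> upper c1 c2 -> ~~ ((b1 == 0) && (b2 == 0)) ->
  0 <= a1 * b2 - b1 * a2 -> 0 <= b1 * c2 - c1 * b2 ->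
  0 <= a1 * c2 - c1 * a2.
Proof.
move=> Ha Hb Hc Hb0 Hab Hbc.
have Ha2 := upper_y_ge0 Ha; have Hc2 := upper_y_ge0 Hc.
case/orP: Hb => [Hb2 | /andP[/eqP Hb2 Hb1]].
  have E : b2 * (a1 * c2 - c1 * a2) =
           (b1 * c2 - c1 * b2) * a2 + (a1 * b2 - b1 * a2) * c2 by ring.
  by rewrite -(pmulr_rge0 _ Hb2) E addr_ge0 // mulr_ge0.
(* b on the positive x-axis forces a onto the positive x-axis too. *)
subst b2; rewrite eqxx andbT in Hb0.
have Hb1' : 0 < b1 by rewrite lt_neqAle eq_sym Hb0.
have Ha20 : a2 = 0.
  apply/eqP; rewrite eq_le Ha2 andbT -oppr_ge0 -(pmulr_rge0 _ Hb1').
  by move: Hab; rewrite mulr0 sub0r mulrN.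
subst a2; have Ha1 : 0 <= a1 by case/orP: Ha => [|/andP[]//]; rewrite ltxx.
by rewrite mulr0 subr0 mulr_ge0.
Qed.

Definition usign (a1 a2 : R) : R := if upper a1 a2 then 1 else -1.

Lemma upper_usign (a1 a2 : R) : upper (usign a1 a2 * a1) (usign a1 a2 * a2).
Proof.
rewrite /usign; case: ifP => [|/negbT]; first by rewrite !mul1r.
rewrite /upper !mulN1r oppr_gt0 oppr_eq0 oppr_ge0 negb_or negb_and.
by case: (ltgtP a2 0) => //= _; rewrite -ltNge => /ltW.
Qed.

Lemma normr_usign (a1 a2 : R) : `|usign a1 a2| = 1.
Proof. by rewrite /usign; case: ifP; rewrite ?normrN normr1. Qed.

End HalfPlane.

Section Columns.
Context {R : realDomainType} {n : nat}.

Definition normalize (X : 'M[R]_(2, n)) : 'M[R]_(2, n) :=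
  \matrix_(r, k) (usign (X ord0 k) (X ord_max k) * X r k).

Lemma upper_normalize (X : 'M[R]_(2, n)) (k : 'I_n) :
  upper (normalize X ord0 k) (normalize X ord_max k).
Proof. by rewrite !mxE; apply: upper_usign. Qed.

Lemma normr_minor2_normalize (X : 'M[R]_(2, n)) (i j : 'I_n) :
  `|minor2 (normalize X) i j| = `|minor2 X i j|.
Proof.
have -> : minor2 (normalize X) i j = usign (X ord0 i) (X ord_max i) *
           usign (X ord0 j) (X ord_max j) * minor2 X i j.
  by rewrite /minor2 !mxE; ring.
by rewrite !normrM !normr_usign !mul1r.
Qed.

Lemma minor2_col_perm (Z : 'M[R]_(2, n)) (s : 'S_n) (i j : 'I_n) :
  minor2 (col_perm s Z) i j = minor2 Z (s i) (s j).
Proof. by rewrite /minor2 !mxE. Qed.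

Lemma minor2_antisym (Z : 'M[R]_(2, n)) (i j : 'I_n) :
  minor2 Z j i = - minor2 Z i j.
Proof. by rewrite /minor2 opprB. Qed.

Definition zero_col (Z : 'M[R]_(2, n)) (i : 'I_n) : bool :=
  (Z ord0 i == 0) && (Z ord_max i == 0).

Definition angle_le (Z : 'M[R]_(2, n)) : rel 'I_n :=
  fun i j => zero_col Z i || (~~ zero_col Z j && (0 <= minor2 Z i j)).

Lemma angle_le_total (Z : 'M[R]_(2, n)) : total (angle_le Z).
Proof.
move=> i j; rewrite /angle_le.
case: (zero_col Z i) (zero_col Z j) => [|] [|] //=.
by rewrite minor2_antisym oppr_ge0 le_total.
Qed.

Lemma angle_le_trans {Z : 'M[R]_(2, n)} :
  (forall k, upper (Z ord0 k) (Z ord_max k)) -> transitive (angle_le Z).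
Proof.
move=> HZ j i k; rewrite /angle_le.
case: (zero_col Z i) => //= /andP[Hj Hij].
rewrite (negbTE Hj) /= => /andP[-> Hjk] /=.
exact: upper_det_trans (HZ i) (HZ j) (HZ k) Hj Hij Hjk.
Qed.

Lemma angle_le_minor2 (Z : 'M[R]_(2, n)) (i j : 'I_n) :
  angle_le Z i j -> 0 <= minor2 Z i j.
Proof.
case/orP => [/andP[/eqP Hx /eqP Hy] | /andP[_ //]].
by rewrite /minor2 Hx Hy !mul0r mulr0 subrr.
Qed.

End Columns.

Lemma sorting_perm {n : nat} {r : rel 'I_n} :
  total r -> transitive r ->
  exists s : 'S_n, forall k l : 'I_n, (k < l)%N -> r (s k) (s l).
Proof.
move=> r_total r_trans; set t := sort r (enum 'I_n).
have size_t : size t = n by rewrite size_sort size_enum_ord.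
have uniq_t : uniq t by rewrite sort_uniq enum_uniq.
have pw_t : pairwise r t by rewrite -sorted_pairwise ?sort_sorted.
have nthE (k l : 'I_n) : nth k t k = nth l t k.
  by apply: set_nth_default; rewrite size_t.
have f_inj : injective (fun k : 'I_n => nth k t k).
  move=> k l; rewrite (nthE k l) => /eqP.
  by rewrite nth_uniq ?size_t // => /eqP /val_inj.
exists (perm f_inj) => k l Hkl; rewrite !permE /= (nthE l k).
by apply: (pairwiseP k pw_t); rewrite ?inE ?size_t.
Qed.

Lemma mem_pairs_lt (n : nat) (p : 'I_n * 'I_n) :
  (p \in pairs_lt n) = (p.1 < p.2)%N.
Proof. by rewrite /pairs_lt mem_filter mem_enum in_setT andbT. Qed.

Lemma perm_eq_pairs_lt {T : eqType} {n : nat} (f : 'I_n -> 'I_n -> T)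
    (s : 'S_n) :
  (forall i j, f i j = f j i) ->
  perm_eq [seq f (s p.1) (s p.2) | p <- pairs_lt n]
          [seq f p.1 p.2 | p <- pairs_lt n].
Proof.
move=> f_sym.
pose g (p : 'I_n * 'I_n) :=
  if (s p.1 < s p.2)%N then (s p.1, s p.2) else (s p.2, s p.1).
have -> : [seq f (s p.1) (s p.2) | p <- pairs_lt n] =
          [seq f q.1 q.2 | q <- map g (pairs_lt n)].
  by rewrite -map_comp; apply: eq_map => p /=; rewrite /g; case: ifP.
apply: perm_map; set P := pairs_lt n.
have g_in : {subset map g P <= P}.
  move=> q /mapP[[a b] + ->]; rewrite !mem_pairs_lt /g /= => Hab.
  case: (ltngtP (s a) (s b)) => //= /val_inj /perm_inj Eab.
  by rewrite Eab ltnn in Hab.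
have g_inj : {in P &, injective g}.
  move=> [a b] [c d]; rewrite !mem_pairs_lt /g /= => Hab Hcd.
  case: ifP => _; case: ifP => _ [/perm_inj Eac /perm_inj Ebd]; subst => //;
    by move: (ltn_trans Hab Hcd); rewrite ltnn.
have uniq_P : uniq P by rewrite filter_uniq ?enum_uniq.
have uniq_gP : uniq (map g P) by rewrite map_inj_in_uniq.
have [_ gP_eq] := uniq_min_size uniq_gP g_in (eq_leq (esym (size_map g P))).
exact: uniq_perm.
Qed.

Theorem mainTheorem7 (R : realType) (n : nat) (X : 'M[R]_(2, n)) :
  exists Y : 'M[R]_(2, n),
    (forall i j : 'I_n, (i < j)%N -> 0 <= minor2 Y i j) /\
    perm_eq (minors Y) [seq `|d| | d <- minors X].
Proof.
set Z := normalize X.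
have [s s_sorts] := sorting_perm (angle_le_total Z)
  (angle_le_trans (upper_normalize X)).
have Y_ge0 (i j : 'I_n) : (i < j)%N -> 0 <= minor2 (col_perm s Z) i j.
  by move=> Hij; rewrite minor2_col_perm; apply/angle_le_minor2/s_sorts.
exists (col_perm s Z); split => //.
have -> : minors (col_perm s Z) =
          [seq `|minor2 Z (s p.1) (s p.2)| | p <- pairs_lt n].
  apply/eq_in_map => p; rewrite mem_pairs_lt => Hp.
  by rewrite -minor2_col_perm ger0_norm ?Y_ge0.
have -> : [seq `|d| | d <- minors X] = [seq `|minor2 Z p.1 p.2| | p <- pairs_lt n].
  by rewrite -map_comp; apply: eq_map => p; rewrite /= normr_minor2_normalize.
apply: (perm_eq_pairs_lt (fun i j => `|minor2 Z i j|)) => i j.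
by rewrite minor2_antisym normrN.
Qed.
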